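(* Let $\pi=\sigma_0,\sigma_1,\dots,\sigma_t=\tau$ be permutations in $S_n$ such that for each $0\le m<t$, $\sigma_{m+1}$ is obtained from $\sigma_m$ by exchanging two entries in adjacent positions $p,p+1$. Say that such a step puts the pair in decreasing order if the entry in position $p$ is smaller than the entry in position $p+1$ in $\sigma_m$ (so it is larger in $\sigma_{m+1}$), and in increasing order otherwise. Suppose $s$ of the steps put the pair in decreasing order and $r$ in increasing order, so $r+s=t$. Let $\lambda=\lambda(\pi)$, $\mu=\lambda(\tau)$ (parts padded with zeros). Then for every $1\le j\le n$, \[\sum_{i=1}^j\mu_i-r\le\sum_{i=1}^j\lambda_i\le\sum_{i=1}^j\mu_i+s.\]
   Context: Permutations are written in one-line notation. For $\pi\in S_n$, $\lambda(\pi)$ denotes the shape of the tableaux associated with $\pi$ by the RSK correspondence. *)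

From mathcomp Require Import all_boot all_fingroup.
Set Implicit Arguments. Unset Strict Implicit. Unset Printing Implicit Defensive.

(* One-line notation of a permutation of 'I_n: [:: s 0; s 1; ...; s (n-1)]
   (values in {0,...,n-1}; RSK shapes are invariant under the shift to 1..n). *)
Definition oneline n (s : 'S_n) : seq nat := [seq val (s i) | i <- enum 'I_n].

Fixpoint row_ins (row : seq nat) (x : nat) : option nat * seq nat :=
  match row with
  | [::] => (None, [:: x])
  | y :: row' => if x < y then (Some y, x :: row')
                 else let: (b, r') := row_ins row' x in (b, y :: r')
  end.

Fixpoint tab_ins (T : seq (seq nat)) (x : nat) : seq (seq nat) :=
  match T with
  | [::] => [:: [:: x]]
  | r :: T' => match row_ins r x with
               | (None, r') => r' :: T'
               | (Some y, r') => r' :: tab_ins T' y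
               end
  end.

Definition rsk_P (w : seq nat) : seq (seq nat) := foldl tab_ins [::] w.
Definition rsk_shape n (s : 'S_n) : seq nat := map size (rsk_P (oneline s)).

(* i-th part (0-indexed) of a shape, padded with zeros. *)
Definition part (la : seq nat) (i : nat) : nat := nth 0 la i.

Definition swap_adj (s : seq nat) (p : nat) : seq nat :=
  set_nth 0 (set_nth 0 s p (nth 0 s p.+1)) p.+1 (nth 0 s p).

Definition dec_step n (sig : nat -> 'S_n) (pos : nat -> nat) (m : nat) : bool :=
  nth 0 (oneline (sig m)) (pos m) < nth 0 (oneline (sig m)) (pos m).+1.

From mathcomp Require Import all_boot all_fingroup.
From mathcomp Require Import zify.
Set Implicit Arguments. Unset Strict Implicit. Unset Printing Implicit Defensive.

(* Let G_j(w) be the largest number of letters of w covered by j disjoint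
   increasing subsequences; by Greene's theorem G_j(w) = lambda_1 + ... + lambda_j
   for lambda = lambda(w).  If w = u a b v with a < b and w' = u b a v, every
   family for w' is a family for w, since b and a never share an increasing
   subsequence of w'; conversely deleting b from a family for w gives one for w'.
   So G_j(w') <= G_j(w) <= G_j(w') + 1, and summing over the t steps gives both
   bounds.
   Greene's theorem is proved the classical way: G_j is invariant under Knuth
   moves, w is Knuth equivalent to the reading word of its insertion tableau P,
   the rows of P give a family of the right size, and a family for the reading
   word meets the first column of P in at most min(j, height) letters, which
   bounds it by induction on the number of columns. *)

Lemma pairwise_rev (T : Type) (r : rel T) (s : seq T) :
  pairwise r (rev s) = pairwise (fun x y => r y x) s.
Proof. by elim: s => //= x s IH; rewrite rev_cons pairwise_rcons IH all_rev. Qed.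

Lemma pairwise_ltn_cat3 (l1 l2 l3 : seq nat) lo hi :
  pairwise ltn l1 -> pairwise ltn l2 -> pairwise ltn l3 ->
  all (ltn^~ lo) l1 -> all (fun b => lo <= b <= hi) l2 -> all (ltn hi) l3 ->
  lo <= hi -> pairwise ltn (l1 ++ l2 ++ l3).
Proof.
move=> p1 p2 p3 /allP a1 /allP a2 /allP a3 lh.
rewrite !pairwise_cat p1 p2 p3 allrel_catr !andbT.
rewrite -andbA; apply/and3P; split; apply/allrelP => a b.
- by move=> /a1 alo /a2 /andP[lob _]; apply: leq_trans alo lob.
- by move=> /a1 alo /a3 hib; apply: ltn_trans alo (leq_ltn_trans lh hib).
- by move=> /a2 /andP[_ ahi] /a3; apply: leq_ltn_trans ahi.
Qed.

Lemma pairwise_ltn_mid (l1 l2 l3 : seq nat) a : pairwise ltn (l1 ++ l2 ++ l3) ->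
  a \in l2 -> [/\ all (ltn^~ a) l1, all (ltn a) l3, pairwise ltn l1 & pairwise ltn l3].
Proof.
rewrite !pairwise_cat allrel_catr => /and3P[/andP[r12 _] p1 /and3P[r23 _ p3]] al2.
by split=> //; apply/allP => b bl; [apply: (allrelP r12) | apply: (allrelP r23)].
Qed.

(** * Families of increasing subsequences *)

(* A family of [j] disjoint increasing subsequences of [w] is a coloring [s] of
   [w] ([unzip1 s = w]) whose classes of colors [k < j] increase; letters of
   color [j] or more are outside the family. *)
Definition color_class (k : nat) (s : seq (nat * nat)) : seq nat :=
  [seq e.1 | e <- s & k == e.2].

Definition classes_incr (j : nat) (s : seq (nat * nat)) : Prop :=
  forall k, k < j -> pairwise ltn (color_class k s).

Definition weight (j : nat) (s : seq (nat * nat)) : nat := count (fun e => e.2 < j) s.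

Definition greene_cover (j : nat) (w : seq nat) (m : nat) : Prop :=
  exists s, [/\ unzip1 s = w, classes_incr j s & m <= weight j s].

Lemma color_class_cat k s1 s2 :
  color_class k (s1 ++ s2) = color_class k s1 ++ color_class k s2.
Proof. by rewrite /color_class filter_cat map_cat. Qed.

Lemma color_class_cons k a c s :
  color_class k ((a, c) :: s) = if k == c then a :: color_class k s else color_class k s.
Proof. by rewrite /color_class /=; case: (k == c). Qed.

Lemma weight_cat j s1 s2 : weight j (s1 ++ s2) = weight j s1 + weight j s2.
Proof. exact: count_cat. Qed.

Lemma weight_cons j e s : weight j (e :: s) = (e.2 < j) + weight j s.
Proof. by []. Qed.

Lemma weight_swap j su sv e1 e2 :
  weight j (su ++ e1 :: e2 :: sv) = weight j (su ++ e2 :: e1 :: sv).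
Proof. by rewrite !weight_cat; congr (_ + _); apply: addnCA. Qed.

Lemma unzip1_catP (s : seq (nat * nat)) u x v : unzip1 s = u ++ x ++ v ->
  exists su sx sv, [/\ s = su ++ sx ++ sv, unzip1 su = u, unzip1 sx = x & unzip1 sv = v].
Proof.
move=> Es; exists (take (size u) s), (take (size x) (drop (size u) s)).
exists (drop (size x) (drop (size u) s)); rewrite !cat_take_drop.
rewrite /unzip1 !map_take !map_drop -/(unzip1 s) Es.
by rewrite take_size_cat // !drop_size_cat // take_size_cat.
Qed.

Lemma classes_incr_swap j su sv a ca b cb :
  classes_incr j (su ++ (a, ca) :: (b, cb) :: sv) -> (ca < j -> ca != cb) ->
  classes_incr j (su ++ (b, cb) :: (a, ca) :: sv).
Proof.
move=> inc_s ne k kj; have := inc_s k kj; rewrite !color_class_cat !color_class_cons.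
case: (eqVneq k ca) => [kca|_]; case: (eqVneq k cb) => [kcb|_] //.
by move: ne; rewrite -kca -kcb eqxx kj => /(_ isT).
Qed.

(* [b] and [a] cannot share an increasing class, so they can be exchanged. *)
Lemma cover_sort2 j u v a b m : a < b ->
  greene_cover j (u ++ [:: b; a] ++ v) m -> greene_cover j (u ++ [:: a; b] ++ v) m.
Proof.
move=> ab [_ [/unzip1_catP[su [sx [sv [-> <- + <-]]]]]].
case: sx => [|[b' cb] [|[a' ca] []]] //= [-> ->] inc_s ms.
exists (su ++ [:: (a, ca); (b, cb)] ++ sv); split; last by rewrite /= -weight_swap.
  by rewrite /unzip1 !map_cat.
apply: classes_incr_swap => // cbj; apply: contraTneq (inc_s cb cbj) => ->.
by rewrite !color_class_cat !color_class_cons eqxx pairwise_cat /= ltnNge ltnW ?andbF.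
Qed.

Lemma classes_incr_sub j s s' :
  (forall k, k < j -> subseq (color_class k s') (color_class k s)) ->
  classes_incr j s -> classes_incr j s'.
Proof. by move=> sub inc_s k kj; apply: subseq_pairwise (sub k kj) (inc_s k kj). Qed.

(* If [a] and [b] lie in the same class, [b] is removed from the family by
   giving it the unused color [j]. *)
Lemma cover_unsort2 j u v a b m : a < b ->
  greene_cover j (u ++ [:: a; b] ++ v) m -> greene_cover j (u ++ [:: b; a] ++ v) m.-1.
Proof.
move=> ab [_ [/unzip1_catP[su [sx [sv [-> <- + <-]]]]]].
case: sx => [|[a' ca] [|[b' cb] []]] //= [-> ->] inc_s ms.
have [/andP[/eqP same caj]|ne] := boolP ((ca == cb) && (ca < j)).
  subst cb; exists (su ++ (b, j) :: (a, ca) :: sv); split.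
  - by rewrite /unzip1 !map_cat.
  - apply: classes_incr_sub inc_s => k kj.
    rewrite !color_class_cat !color_class_cons ltn_eqF //.
    case: (k == ca); rewrite subseq_cat2l ?subseq_refl //.
    by rewrite -[a :: color_class k sv]cat1s -[a :: b :: _]cat1s subseq_cat2l subseq_cons.
  - by move: ms; rewrite !weight_cat /weight /= ltnn caj /=; lia.
exists (su ++ (b, cb) :: (a, ca) :: sv); split.
- by rewrite /unzip1 !map_cat.
- by apply: classes_incr_swap => // caj; apply: contra ne => ->.
- by rewrite -weight_swap; apply: leq_trans ms; apply: leq_pred.
Qed.

Definition transp (A C k : nat) : nat := if k == A then C else if k == C then A else k.

Lemma transpK A C : involutive (transp A C).
Proof.
move=> k; rewrite /transp; case: (eqVneq k A) => [->|kA]; first by rewrite eqxx; case: (eqVneq C A).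
case: (eqVneq k C) => [->|kC]; first by rewrite eqxx.
by rewrite (negbTE kA) (negbTE kC).
Qed.

Definition recolor A C (e : nat * nat) : nat * nat := (e.1, transp A C e.2).

Lemma color_class_recolor k A C s :
  color_class k (map (recolor A C) s) = color_class (transp A C k) s.
Proof.
rewrite /color_class filter_map -map_comp; congr map; apply: eq_filter => e /=.
by rewrite eq_sym (inv_eq (transpK A C)) eq_sym.
Qed.

Lemma weight_recolor j A C s : A < j -> C < j -> weight j (map (recolor A C) s) = weight j s.
Proof.
move=> Aj Cj; rewrite /weight count_map; apply: eq_count => -[a c] /=.
by rewrite /transp; case: eqP => [->|_]; [|case: eqP => [->|_]]; rewrite ?Aj ?Cj.
Qed.

Section KnuthXZY.

Variables (j : nat) (su sv : seq (nat * nat)) (x y z A C : nat).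
Hypotheses (xy : x < y) (yz : y < z) (Aj : A < j).
Hypothesis inc_s : classes_incr j (su ++ (x, A) :: (z, A) :: (y, C) :: sv).

Lemma knuth_xzy_classA :
  [/\ A != C, all (ltn^~ x) (color_class A su), pairwise ltn (color_class A su),
      all (ltn z) (color_class A sv) & pairwise ltn (color_class A sv)].
Proof.
have := inc_s Aj; rewrite color_class_cat !color_class_cons eqxx.
have [_|AC] := eqVneq A C; first by rewrite pairwise_cat /= (leq_gtF (ltnW yz)) !andbF.
move=> HA; have [Ax _ pAu pAv] := pairwise_ltn_mid (l2 := [:: x; z]) HA (mem_head _ _).
by have [_ /= Az _ _] := pairwise_ltn_mid (l2 := [:: x; z]) HA (mem_last _ _).
Qed.

(* [x y] go to class [A] and [z] to class [C]; after [y] the classes [A]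
   and [C] are exchanged. *)
Lemma classes_incr_xzy_recolor : C < j ->
  classes_incr j (su ++ (z, C) :: (x, A) :: (y, A) :: map (recolor A C) sv).
Proof.
move=> Cj; have [AC Ax pAu Az pAv] := knuth_xzy_classA.
have := inc_s Cj; rewrite color_class_cat !color_class_cons eq_sym (negbTE AC) eqxx.
case/(pairwise_ltn_mid (l2 := [:: y]))/(_ (mem_head _ _)) => Cy yC pCu pCv.
move=> k kj; rewrite color_class_cat !color_class_cons color_class_recolor /transp.
case: (eqVneq k A) => [->|kA].
  rewrite (negbTE AC); apply: (pairwise_ltn_cat3 (l2 := [:: x; y]) (lo := x) (hi := y)) => //=;
    by rewrite ?xy ?leqnn ?(ltnW xy).
case: (eqVneq k C) => [->|kC].
  apply: (pairwise_ltn_cat3 (l2 := [:: z]) (lo := z) (hi := z)) => //=; rewrite ?leqnn //.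
  by apply: sub_all Cy => b bz; apply: ltn_trans bz yz.
by have := inc_s kj; rewrite color_class_cat !color_class_cons (negbTE kA) (negbTE kC).
Qed.

Lemma classes_incr_xzy_uncolor : j <= C ->
  classes_incr j (su ++ (z, C) :: (x, A) :: (y, A) :: sv).
Proof.
move=> jC; have [_ Ax pAu Az pAv] := knuth_xzy_classA.
move=> k kj; rewrite color_class_cat !color_class_cons.
have kC : k != C by rewrite neq_ltn (leq_trans kj jC).
rewrite (negbTE kC); case: (eqVneq k A) => [->|kA].
  apply: (pairwise_ltn_cat3 (l2 := [:: x; y]) (lo := x) (hi := y)) => //=;
    rewrite ?xy ?leqnn ?(ltnW xy) //.
  by apply: sub_all Az => b; apply: ltn_trans.
by have := inc_s kj; rewrite color_class_cat !color_class_cons (negbTE kA) (negbTE kC).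
Qed.

End KnuthXZY.

Lemma cover_knuth_xzy j u v x y z m : x < y -> y < z ->
  greene_cover j (u ++ [:: x; z; y] ++ v) m -> greene_cover j (u ++ [:: z; x; y] ++ v) m.
Proof.
move=> xy yz [_ [/unzip1_catP[su [sx [sv [-> <- + <-]]]]]].
case: sx => [|[x' A] [|[z' B] [|[y' C] []]]] //= [-> -> ->] inc_s ms.
have [/andP[/eqP same Aj]|ne] := boolP ((A == B) && (A < j)); last first.
  exists (su ++ (z, B) :: (x, A) :: (y, C) :: sv); split.
  - by rewrite /unzip1 !map_cat.
  - by apply: classes_incr_swap => // Aj; apply: contra ne => ->.
  - by rewrite -weight_swap.
subst B; have [Cj|jC] := ltnP C j.
  exists (su ++ (z, C) :: (x, A) :: (y, A) :: map (recolor A C) sv); split.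
  - by rewrite /unzip1 map_cat /= -map_comp.
  - exact: classes_incr_xzy_recolor.
  - by move: ms; rewrite !weight_cat !weight_cons weight_recolor //= Aj Cj.
exists (su ++ (z, C) :: (x, A) :: (y, A) :: sv); split.
- by rewrite /unzip1 map_cat.
- exact: classes_incr_xzy_uncolor.
- by move: ms; rewrite !weight_cat !weight_cons /= Aj ltnNge jC.
Qed.

Definition dual_word (N : nat) (w : seq nat) : seq nat := rev (map (fun a => N - a) w).

Lemma dual_word_cat N w1 w2 : dual_word N (w1 ++ w2) = dual_word N w2 ++ dual_word N w1.
Proof. by rewrite /dual_word map_cat rev_cat. Qed.

Lemma dual_wordK N w : all (leq^~ N) w -> dual_word N (dual_word N w) = w.
Proof.
move=> /allP wN; rewrite /dual_word map_rev revK -map_comp -[RHS]map_id.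
by apply/eq_in_map => a /wN aN /=; rewrite subKn.
Qed.

Lemma dual_word_bounded N w : all (leq^~ N) (dual_word N w).
Proof. by rewrite all_rev all_map; apply/allP => a _; apply: leq_subr. Qed.

Lemma color_class_sub k s : subseq (color_class k s) (unzip1 s).
Proof. exact/map_subseq/filter_subseq. Qed.

(* Reversing a word and complementing its letters maps increasing
   subsequences to increasing subsequences. *)
Lemma cover_dual j N w m : all (leq^~ N) w ->
  greene_cover j w m -> greene_cover j (dual_word N w) m.
Proof.
move=> wN [s [Es inc_s ms]]; exists (rev (map (fun e => (N - e.1, e.2)) s)); split.
- by rewrite -Es /unzip1 /dual_word map_rev -!map_comp.
- move=> k kj; have := inc_s k kj.
  have -> : color_class k (rev (map (fun e => (N - e.1, e.2)) s)) =
            dual_word N (color_class k s).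
    by rewrite /color_class /dual_word filter_rev map_rev filter_map -!map_comp.
  rewrite /dual_word pairwise_rev pairwise_map; apply: (sub_in_pairwise (P := leq^~ N)).
    by move=> a b _ bN /= ab; apply: ltn_sub2l (leq_trans ab bN) ab.
  by apply/allP => a /(mem_subseq (color_class_sub k s)); rewrite Es => /(allP wN).
- by rewrite /weight count_rev count_map.
Qed.

(* Reversing and complementing turns this move into a move [x z y -> z x y]. *)
Lemma cover_knuth_yxz j u v x y z m : x < y -> y < z ->
  greene_cover j (u ++ [:: y; x; z] ++ v) m -> greene_cover j (u ++ [:: y; z; x] ++ v) m.
Proof.
move=> xy yz; set N := \max_(a <- u ++ [:: y; x; z] ++ v) a.
have wN : all (leq^~ N) (u ++ [:: y; x; z] ++ v).
  by apply/allP => a aw; apply: leq_bigmax_seq.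
have w'N : all (leq^~ N) (u ++ [:: y; z; x] ++ v).
  by move: wN; rewrite !all_cat /= !andbT => /and3P[-> /and3P[-> -> ->] ->].
have yN : y < N.
  by move: wN; rewrite !all_cat /= => /and3P[_ /and4P[_ _ zN _] _]; apply: leq_trans yz zN.
move=> /(cover_dual wN); rewrite !dual_word_cat -catA /=.
move=> /(cover_knuth_xzy (ltn_sub2l yN yz) (ltn_sub2l (ltn_trans xy yN) xy)) cov.
rewrite -(dual_wordK w'N); apply: cover_dual (dual_word_bounded _ _) _.
by rewrite !dual_word_cat -catA.
Qed.

(** * Knuth equivalence and Schensted insertion *)

Inductive knuth_eq : seq nat -> seq nat -> Prop :=
| knuth_refl w : knuth_eq w w
| knuth_sym w w' : knuth_eq w w' -> knuth_eq w' w
| knuth_trans w1 w2 w3 : knuth_eq w1 w2 -> knuth_eq w2 w3 -> knuth_eq w1 w3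
| knuth_xzy u v x y z : x < y -> y < z ->
    knuth_eq (u ++ [:: x; z; y] ++ v) (u ++ [:: z; x; y] ++ v)
| knuth_yxz u v x y z : x < y -> y < z ->
    knuth_eq (u ++ [:: y; x; z] ++ v) (u ++ [:: y; z; x] ++ v).

Lemma knuth_eq_cover j w w' m : knuth_eq w w' -> greene_cover j w m <-> greene_cover j w' m.
Proof.
elim=> {w w'} [//|w w' _ IH|w1 w2 w3 _ IH1 _ IH2|u v x y z xy yz|u v x y z xy yz].
- by rewrite IH.
- by rewrite IH1 IH2.
- split; first exact: cover_knuth_xzy.
  exact: (cover_sort2 (v := y :: v) (ltn_trans xy yz)).
- split; first exact: cover_knuth_yxz.
  have := cover_sort2 (j := j) (u := u ++ [:: y]) (v := v) (m := m) (ltn_trans xy yz).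
  by rewrite -!catA.
Qed.

Lemma knuth_eq_catl t w w' : knuth_eq w w' -> knuth_eq (t ++ w) (t ++ w').
Proof.
elim=> {w w'}; try by econstructor; eauto.
- by move=> u v x y z xy yz; rewrite (catA t u) (catA t u); apply: knuth_xzy.
- by move=> u v x y z xy yz; rewrite (catA t u) (catA t u); apply: knuth_yxz.
Qed.

Lemma knuth_eq_catr t w w' : knuth_eq w w' -> knuth_eq (w ++ t) (w' ++ t).
Proof.
elim=> {w w'}; try by econstructor; eauto.
- by move=> u v x y z; rewrite -!catA; apply: knuth_xzy.
- by move=> u v x y z; rewrite -!catA; apply: knuth_yxz.
Qed.

Definition seq_of_option (o : option nat) : seq nat := if o is Some y then [:: y] else [::].

Lemma perm_row_ins r x :
  perm_eq (x :: r) (seq_of_option (row_ins r x).1 ++ (row_ins r x).2).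
Proof.
elim: r => [|c r IH] //=; case: ifP => _; first by apply/seq.permP => p /=; rewrite addnCA.
case: (row_ins r x) IH => [b r'] /= /seq.permP IH; apply/seq.permP => p.
by move: (IH p); rewrite /= !count_cat /= addnCA => ->; rewrite addnCA.
Qed.

Lemma row_ins_bump_gt r x y : (row_ins r x).1 = Some y -> x < y.
Proof.
elim: r => [|c r IH] //=; case: ifP => xc; first by case=> <-.
by case: (row_ins r x) IH.
Qed.

Lemma row_ins_bump_mem r x y : (row_ins r x).1 = Some y -> y \in r.
Proof.
move=> bump; have : y \in x :: r by rewrite (perm_mem (perm_row_ins r x)) bump mem_head.
by rewrite inE => /orP[/eqP yx|//]; have := row_ins_bump_gt bump; rewrite yx ltnn.
Qed.

Lemma mem_row_ins r x z : z \in (row_ins r x).2 -> z \in x :: r.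
Proof. by move=> zr; rewrite (perm_mem (perm_row_ins r x)) mem_cat zr orbT. Qed.

Lemma row_ins_incr r x : pairwise ltn r -> x \notin r -> pairwise ltn (row_ins r x).2.
Proof.
elim: r => [|c r IH] //=; rewrite inE negb_or => /andP[cr pr] /andP[xc xr].
case: ifP => cx /=.
  by rewrite pr andbT; apply: sub_all cr => z; apply: ltn_trans.
case E: (row_ins r x) IH => [b r'] /= IH; rewrite IH // andbT.
apply/allP => z zr'; have := @mem_row_ins r x z; rewrite E inE => /(_ zr').
by case/orP=> [/eqP ->|/(allP cr)] //; rewrite /= ltnNge leq_eqVlt cx orbF.
Qed.

Lemma row_ins_none r x : (row_ins r x).1 = None -> (row_ins r x).2 = rcons r x.
Proof.
elim: r => [|c r IH] //=; case: ifP => // _.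
by case: (row_ins r x) IH => [b r'] /= IH /IH ->.
Qed.

Lemma row_ins_head r x y r' : pairwise ltn r -> row_ins r x = (Some y, r') ->
  exists h t, r' = h :: t /\ h < y.
Proof.
case: r => [|c r] //= /andP[cr _]; case: ifP => xc; first by case=> <- <-; exists x, r.
case E: (row_ins r x) => [b r0'] [bump <-]; exists c, r0'; split=> //.
by apply: (allP cr); apply: (@row_ins_bump_mem r x); rewrite E.
Qed.

Lemma knuth_eq_bubble c r x : pairwise ltn (c :: r) -> x < c ->
  knuth_eq (c :: r ++ [:: x]) (c :: x :: r).
Proof.
elim: r c => [|d r IH] c; first by constructor.
rewrite /= => /andP[/andP[cd cr] /andP[dr pr]] xc.
apply: (@knuth_trans _ (c :: d :: x :: r)).
  by apply: (knuth_eq_catl [:: c]); apply: IH; rewrite /= ?dr ?(ltn_trans xc cd).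
exact/knuth_sym/(knuth_yxz [::] r xc cd).
Qed.

Lemma knuth_eq_row_ins r x y r' : pairwise ltn r -> x \notin r ->
  row_ins r x = (Some y, r') -> knuth_eq (r ++ [:: x]) (y :: r').
Proof.
elim: r r' => [|c r IH] r' //= /andP[cr pr]; rewrite inE negb_or => /andP[xc xr].
case: ifP => cx; first by case=> <- <-; apply: knuth_eq_bubble => //=; rewrite cr.
case E: (row_ins r x) => [b r0'] [bump <-]; subst b.
have [h [t [r0'E hy]]] := row_ins_head pr E.
apply: (@knuth_trans _ (c :: y :: r0')); first exact: (knuth_eq_catl [:: c]) (IH _ pr xr E).
have ch : c < h.
  have := @mem_row_ins r x h; rewrite E r0'E inE eqxx => /(_ isT).
  by rewrite inE => /orP[/eqP ->|/(allP cr)] //; rewrite ltnNge leq_eqVlt cx orbF.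
by rewrite r0'E; apply: (knuth_xzy [::] t ch hy).
Qed.

Definition reading (T : seq (seq nat)) : seq nat := flatten (rev T).

Lemma reading_cons r T : reading (r :: T) = reading T ++ r.
Proof. by rewrite /reading rev_cons flatten_rcons. Qed.

Lemma perm_tab_ins T x : perm_eq (flatten (tab_ins T x)) (x :: flatten T).
Proof.
elim: T x => [|r T IH] x //=.
have := perm_row_ins r x; case: (row_ins r x) => [[y|] r'] /= Hp; last first.
  by rewrite -cat_cons perm_cat2r perm_sym.
apply: perm_trans (perm_cat (perm_refl r') (IH y)) _.
by rewrite -cat1s perm_catCA catA cat1s -!cat_cons perm_cat2r perm_sym.
Qed.

Lemma tab_ins_rows_incr T x : all (pairwise ltn) T -> uniq (x :: flatten T) ->
  all (pairwise ltn) (tab_ins T x).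
Proof.
elim: T x => [|r T IH] x //= /andP[pr pT].
rewrite cat_uniq mem_cat negb_or -andbA => /and5P[xr xT ur disj uT].
have := row_ins_incr pr xr; have := @row_ins_bump_mem r x.
case: (row_ins r x) => [[y|] r'] //= yr -> //=; apply: IH => //=; rewrite uT andbT.
by apply: contraNN disj => yT; apply/hasP; exists y => //; apply: yr.
Qed.

Lemma knuth_eq_tab_ins T x : all (pairwise ltn) T -> uniq (x :: flatten T) ->
  knuth_eq (reading T ++ [:: x]) (reading (tab_ins T x)).
Proof.
elim: T x => [|r T IH] x /=; first by constructor.
move=> /andP[pr pT]; rewrite cat_uniq mem_cat negb_or -andbA => /and5P[xr xT ur disj uT].
rewrite reading_cons; case E: (row_ins r x) => [[y|] r'] /=; last first.
  have := @row_ins_none r x; rewrite E => /(_ erefl) /= ->.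
  by rewrite reading_cons -cats1 catA; constructor.
have yr : y \in r by apply: (@row_ins_bump_mem r x); rewrite E.
have yT : y \notin flatten T by apply: contraNN disj => yT; apply/hasP; exists y.
rewrite reading_cons -catA; apply: (@knuth_trans _ (reading T ++ y :: r')).
  exact/knuth_eq_catl/(knuth_eq_row_ins pr xr E).
by rewrite -cat1s catA; apply/knuth_eq_catr/IH; rewrite //= yT.
Qed.

Lemma rsk_P_rcons w x : rsk_P (rcons w x) = tab_ins (rsk_P w) x.
Proof. by rewrite /rsk_P foldl_rcons. Qed.

Lemma perm_rsk_P w : perm_eq (flatten (rsk_P w)) w.
Proof.
elim/last_ind: w => [|w x IH] //; rewrite rsk_P_rcons.
by apply: perm_trans (perm_tab_ins _ x) _; rewrite perm_sym perm_rcons perm_cons perm_sym.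
Qed.

Lemma rsk_P_rows_incr w : uniq w -> all (pairwise ltn) (rsk_P w).
Proof.
elim/last_ind: w => [|w x IH] //; rewrite rcons_uniq rsk_P_rcons => /andP[xw uw].
apply: tab_ins_rows_incr (IH uw) _.
by rewrite /= (perm_uniq (perm_rsk_P w)) (perm_mem (perm_rsk_P w)) xw.
Qed.

Lemma knuth_eq_rsk_P w : uniq w -> knuth_eq (reading (rsk_P w)) w.
Proof.
elim/last_ind: w => [|w x IH]; first by constructor.
rewrite rcons_uniq rsk_P_rcons => /andP[xw uw].
apply: knuth_trans (knuth_sym (knuth_eq_tab_ins (rsk_P_rows_incr uw) _)) _.
  by rewrite /= (perm_uniq (perm_rsk_P w)) (perm_mem (perm_rsk_P w)) xw.
by rewrite -cats1; apply/knuth_eq_catr/IH.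
Qed.

Definition col_strict (r r' : seq nat) : bool :=
  (size r' <= size r) && all (fun c => nth 0 r c < nth 0 r' c) (iota 0 (size r')).

Lemma col_strictP r r' : reflect (size r' <= size r /\
  forall c, c < size r' -> nth 0 r c < nth 0 r' c) (col_strict r r').
Proof.
apply: (iffP andP) => [[sz /allP lt]|[sz lt]]; split => //.
  by move=> c cr; apply: lt; rewrite mem_iota.
by apply/allP => c; rewrite mem_iota => /andP[_]; apply: lt.
Qed.

Lemma pairwise_ltn_nth r i j : pairwise ltn r -> i < j < size r -> nth 0 r i < nth 0 r j.
Proof.
move=> pr /andP[ij jr]; apply: (pairwiseP 0 pr) => //; rewrite inE //.
exact: ltn_trans ij jr.
Qed.

Lemma row_ins_set_nth r x : (row_ins r x).2 = set_nth 0 r (find (ltn x) r) x.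
Proof.
elim: r => [|c r IH] //=; case: ifP => //= _.
by case: (row_ins r x) IH => b r' /= ->.
Qed.

Lemma row_ins_bump_nth r x y : (row_ins r x).1 = Some y ->
  find (ltn x) r < size r /\ y = nth 0 r (find (ltn x) r).
Proof.
elim: r => [|c r IH] //=; case: ifP => _ /=; first by case=> ->.
by case: (row_ins r x) IH => b r' /= IH /IH[].
Qed.

Lemma col_strict_set_nth r0 r1 k x k' y : col_strict r0 r1 -> k < size r0 ->
  x <= nth 0 r0 k -> k' <= size r1 -> k' <= k -> nth 0 (set_nth 0 r0 k x) k' < y ->
  col_strict (set_nth 0 r0 k x) (set_nth 0 r1 k' y).
Proof.
move=> /col_strictP[sz lt] kr0 xle k'r1 k'k lty; apply/col_strictP.
rewrite !size_set_nth (maxn_idPr kr0) geq_max sz andbT; split.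
  exact: leq_ltn_trans k'k kr0.
move=> c; rewrite [nth 0 (set_nth _ r1 _ _) c]nth_set_nth /=; case: eqP => [-> //|ck' cs].
have cr1 : c < size r1 by move: cs ck' k'r1; lia.
apply: leq_ltn_trans (lt c cr1); rewrite nth_set_nth /=.
by case: eqP => [->|].
Qed.

Lemma col_strict_row_ins r0 r1 x y : pairwise ltn r0 -> col_strict r0 r1 ->
  (row_ins r0 x).1 = Some y -> col_strict (row_ins r0 x).2 (row_ins r1 y).2.
Proof.
move=> pr0 cs bump; have xy := row_ins_bump_gt bump.
have [kr0 yE] := row_ins_bump_nth bump; rewrite !row_ins_set_nth.
set k := find (ltn x) r0 in kr0 yE *; set k' := find (ltn y) r1.
have k'k : k' <= k.
  have [kr1|] := ltnP k (size r1); last by apply: leq_trans; apply: find_size.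
  rewrite leqNgt; apply/negP => /(before_find 0) /=; rewrite yE.
  by case/col_strictP: cs => _ /(_ k kr1) ->.
apply: col_strict_set_nth; rewrite // -?yE ?(ltnW xy) ?find_size //.
rewrite nth_set_nth /=; case: eqP => [//|/eqP k'_neq_k].
by rewrite yE; apply: pairwise_ltn_nth; rewrite // ltn_neqAle k'_neq_k k'k.
Qed.

Lemma col_strict_rcons r0 r1 x : col_strict r0 r1 -> col_strict (rcons r0 x) r1.
Proof.
move/col_strictP=> [sz lt]; apply/col_strictP; rewrite size_rcons; split; first exact: leqW.
by move=> c cr1; rewrite nth_rcons (leq_trans cr1 sz); apply: lt.
Qed.

Lemma tab_ins_head T y : exists T', tab_ins T y = (row_ins (head [::] T) y).2 :: T'.
Proof.
case: T => [|r T] /=; first by exists [::].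
by case: (row_ins r y) => [[z|] r']; eexists.
Qed.

Lemma tab_ins_col_strict T x : all (pairwise ltn) T -> sorted col_strict T ->
  sorted col_strict (tab_ins T x).
Proof.
elim: T x => [|r0 T IH] x //= /andP[pr0 pT] sT.
have sT' : sorted col_strict T := path_sorted sT.
have cs0 : col_strict r0 (head [::] T).
  by case: T sT {IH pT sT'} => [|r1 T] /=; [rewrite /col_strict leq0n | case/andP].
have := @col_strict_row_ins r0 (head [::] T) x; have := @row_ins_none r0 x.
case: (row_ins r0 x) => [[y|] r'] /= none bump.
  have [T' ET] := tab_ins_head T y; have := IH y pT sT'; rewrite ET /= => ->.
  by rewrite andbT bump.
rewrite none //; case: T sT {IH pT sT' cs0 bump} => [|r1 T] //= /andP[cs ->].
by rewrite col_strict_rcons.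
Qed.

Lemma rsk_P_col_strict w : uniq w -> sorted col_strict (rsk_P w).
Proof.
elim/last_ind: w => [|w x IH] //; rewrite rcons_uniq rsk_P_rcons => /andP[_ uw].
exact: tab_ins_col_strict (rsk_P_rows_incr uw) (IH uw).
Qed.

(** * Greene's theorem *)

Definition shape_sum (j : nat) (T : seq (seq nat)) : nat := \sum_(i < j) size (nth [::] T i).

Fixpoint row_coloring (k : nat) (T : seq (seq nat)) : seq (nat * nat) :=
  if T is r :: T' then row_coloring k.+1 T' ++ [seq (a, k) | a <- r] else [::].

Lemma unzip1_row_coloring k T : unzip1 (row_coloring k T) = reading T.
Proof.
elim: T k => [|r T IH] k //=; rewrite reading_cons /unzip1 map_cat -/(unzip1 _) IH.
by rewrite -map_comp map_id.
Qed.

Lemma color_class_const c k r : color_class c [seq (a, k) | a <- r] = if c == k then r else [::].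
Proof. by elim: r => [|a r IH] /=; rewrite ?color_class_cons ?IH; case: eqP. Qed.

Lemma color_class_row_coloring c k T :
  color_class c (row_coloring k T) = if k <= c then nth [::] T (c - k) else [::].
Proof.
elim: T k => [|r T IH] k /=; first by rewrite nth_nil if_same.
rewrite color_class_cat IH color_class_const; case: (ltngtP k c) => [kc|ck|->] /=.
- by rewrite cats0 subnS -[c - k]prednK ?subn_gt0.
- by [].
- by rewrite subnn.
Qed.

Lemma weight_classes j s : weight j s = \sum_(c < j) size (color_class c s).
Proof.
elim: j => [|j IH]; first by rewrite big_ord0 /weight (eq_count (a2 := pred0)) ?count_pred0.
rewrite big_ord_recr -IH /= /color_class size_map size_filter /weight.
elim: s {IH} => //= e s ->; rewrite ltnS leq_eqVlt eq_sym.
by case: ltngtP => //= _; rewrite ?add0n ?addn0 // addnCA addnA.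
Qed.

Lemma greene_cover_tableau j T : all (pairwise ltn) T -> greene_cover j (reading T) (shape_sum j T).
Proof.
move=> pT; exists (row_coloring 0 T); split; first exact: unzip1_row_coloring.
  move=> c _; rewrite color_class_row_coloring subn0 /=.
  by have [cT|cT] := ltnP c (size T); [apply: (all_nthP [::] pT) | rewrite nth_default].
rewrite weight_classes /shape_sum; apply/eq_leq/eq_bigr => c _.
by rewrite color_class_row_coloring subn0.
Qed.

Lemma size_pairwise_ltn_gtn (l : seq nat) : pairwise ltn l -> pairwise gtn l -> size l <= 1.
Proof. by case: l => [|a [|b l]] //= /andP[/andP[ab _] _] /andP[/andP[ba _] _]; lia. Qed.

Lemma classes_incr_subseq j s s' : subseq s' s -> classes_incr j s -> classes_incr j s'.
Proof.
move=> sub; apply: classes_incr_sub => k _.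
by apply/map_subseq; rewrite subseq_filter filter_all /= (subseq_trans (filter_subseq _ _) sub).
Qed.

(* A decreasing word meets each increasing class at most once. *)
Lemma weight_decreasing j s : classes_incr j s -> pairwise gtn (unzip1 s) -> weight j s <= j.
Proof.
move=> inc_s dec_s; rewrite weight_classes -[leqRHS]card_ord -sum1_card leq_sum // => c _.
apply: size_pairwise_ltn_gtn; first exact: inc_s.
exact: subseq_pairwise (color_class_sub c s) dec_s.
Qed.

Lemma flatten_rev_cons (A : Type) (x : seq A) (X : seq (seq A)) :
  flatten (rev (x :: X)) = flatten (rev X) ++ x.
Proof. by rewrite rev_cons flatten_rcons. Qed.

Lemma unzip1_readingP (s : seq (nat * nat)) T : unzip1 s = reading T ->
  exists CT, map unzip1 CT = T /\ s = flatten (rev CT).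
Proof.
elim: T s => [|r T IH] s; first by case: s => // _; exists [::].
rewrite reading_cons -[_ ++ r]cats0 -catA.
case/unzip1_catP=> s1 [s2 [[|??] [-> /IH[CT [<- ->]] <- //]]].
by exists (s2 :: CT); rewrite flatten_rev_cons cats0.
Qed.

Section ColoredRows.

Variable CT : seq (seq (nat * nat)).

Lemma weight_take_drop j : weight j (flatten (rev CT)) =
  weight j (flatten (rev (map (drop 1) CT))) + weight j (flatten (rev (map (take 1) CT))).
Proof.
elim: CT => [|r CT' IH] //=; rewrite !flatten_rev_cons !weight_cat IH.
by rewrite -{1}(cat_take_drop 1 r) weight_cat; lia.
Qed.

Lemma subseq_flatten_rev_map f : (forall r, subseq (f r) r) ->
  subseq (flatten (rev (map f CT))) (flatten (rev CT)).
Proof.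
move=> fsub; elim: CT => [|r CT' IH] //=.
by rewrite !flatten_rev_cons; apply: cat_subseq.
Qed.

Lemma unzip1_flatten_rev_map (f : seq (nat * nat) -> seq (nat * nat)) (g : seq nat -> seq nat) :
  (forall r, unzip1 (f r) = g (unzip1 r)) ->
  unzip1 (flatten (rev (map f CT))) = reading (map g (map unzip1 CT)).
Proof.
move=> fg; rewrite /reading /unzip1 map_flatten !map_rev -!map_comp; congr (flatten (rev _)).
exact: eq_map.
Qed.

End ColoredRows.

Lemma col_strict_trans : transitive col_strict.
Proof.
move=> r1 r0 r2 /col_strictP[s01 lt01] /col_strictP[s12 lt12]; apply/col_strictP.
split=> [|c cr2]; first exact: leq_trans s12 s01.
exact: ltn_trans (lt01 c (leq_trans cr2 s12)) (lt12 c cr2).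
Qed.

Lemma col_strict_nil r : col_strict [::] r -> r = [::].
Proof. by case: r. Qed.

Lemma col_strict_drop1 r r' : col_strict r r' -> col_strict (drop 1 r) (drop 1 r').
Proof.
move/col_strictP=> [sz lt]; apply/col_strictP; rewrite !size_drop leq_sub2r //.
by split=> // c cr'; rewrite !nth_drop; apply: lt; rewrite -ltn_subRL.
Qed.

Lemma sorted_col_strict_drop1 T : sorted col_strict T -> sorted col_strict (map (drop 1) T).
Proof.
case: T => [|r T] //=; elim: T r => [|r1 T IH] r //= /andP[cs p].
by rewrite col_strict_drop1 // IH.
Qed.

Lemma col_strict_take1 r r' a b : col_strict r r' -> a \in take 1 r -> b \in take 1 r' -> a < b.
Proof.
case: r' => [|b' r'] // /col_strictP[sz lt]; case: r sz lt => [|a' r] // _ lt.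
by rewrite /= !take0 !inE => /eqP-> /eqP->; apply: (lt 0).
Qed.

Lemma first_column_decreasing T : sorted col_strict T -> pairwise gtn (reading (map (take 1) T)).
Proof.
rewrite (sorted_pairwise col_strict_trans).
have -> : reading (map (take 1) T) = rev (flatten (map (take 1) T)).
  rewrite rev_flatten -map_comp /reading; congr (flatten (rev _)).
  by apply: eq_map => -[|a r] /=; rewrite ?take0.
rewrite pairwise_rev; elim: T => [|r T IH] //= /andP[csr pT].
rewrite pairwise_cat IH // andbT; apply/andP; split.
  apply/allrelP => a b ar /flatten_mapP[r' r'T br'].
  exact: col_strict_take1 (allP csr r' r'T) ar br'.
by case: r {csr} => //= a r; rewrite take0.
Qed.

Lemma nth_map_drop1 (T : seq (seq nat)) i : nth [::] (map (drop 1) T) i = drop 1 (nth [::] T i).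
Proof. by elim: T i => [|r T IH] [|i] //=; rewrite drop_oversize. Qed.

Lemma shape_sum_drop1 j T : shape_sum j T =
  shape_sum j (map (drop 1) T) + \sum_(i < j) size (take 1 (nth [::] T i)).
Proof.
rewrite /shape_sum -big_split; apply: eq_bigr => i _.
by rewrite /= nth_map_drop1 addnC -size_cat cat_take_drop.
Qed.

Lemma sorted_col_strict_nil T : sorted col_strict ([::] :: T) -> reading (map (take 1) T) = [::].
Proof.
elim: T => //= r T IH /andP[/col_strict_nil -> sT].
by rewrite reading_cons IH.
Qed.

Lemma first_column_count j T : sorted col_strict T ->
  minn j (size (reading (map (take 1) T))) <= \sum_(i < j) size (take 1 (nth [::] T i)).
Proof.
elim: T j => [|r T IH] [|j] sT; rewrite ?min0n ?minn0 ?big_ord0 //.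
rewrite big_ord_recl /= reading_cons size_cat; case: r sT => [|a r] sT.
  by rewrite sorted_col_strict_nil.
by rewrite /= take0 addn1 minnSS add1n ltnS IH // (path_sorted sT).
Qed.

Lemma weight_colored_tableau j N CT : all (fun r => size r <= N) CT ->
  sorted col_strict (map unzip1 CT) -> classes_incr j (flatten (rev CT)) ->
  weight j (flatten (rev CT)) <= shape_sum j (map unzip1 CT).
Proof.
elim: N CT => [|N IH] CT szCT sT inc.
  suff -> : flatten (rev CT) = [::] by [].
  elim: CT szCT {sT inc} => //= r CT IHCT /andP[]; rewrite leqn0 => /nilP-> /IHCT.
  by rewrite flatten_rev_cons => ->.
set T := map unzip1 CT; rewrite weight_take_drop (shape_sum_drop1 j T) leq_add //.
  have mapE : map unzip1 (map (drop 1) CT) = map (drop 1) T.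
    by rewrite -!map_comp; apply/eq_map => r; rewrite /= /unzip1 map_drop.
  rewrite -mapE; apply: IH.
  - by rewrite all_map; apply: sub_all szCT => r /=; rewrite size_drop leq_subLR.
  - by rewrite mapE sorted_col_strict_drop1.
  - exact: classes_incr_subseq (subseq_flatten_rev_map CT (fun r => drop_subseq r 1)) inc.
have col1 := unzip1_flatten_rev_map CT (fun r => map_take 1 fst r).
apply: leq_trans (first_column_count j sT); rewrite leq_min; apply/andP; split.
  apply: weight_decreasing; last by rewrite col1 first_column_decreasing.
  exact: classes_incr_subseq (subseq_flatten_rev_map CT (fun r => take_subseq r 1)) inc.
by rewrite -col1 size_map; apply: count_size.
Qed.

Theorem greene j w : uniq w ->
  greene_cover j w (shape_sum j (rsk_P w)) /\
  forall m, greene_cover j w m -> m <= shape_sum j (rsk_P w).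
Proof.
move=> uw; have cover_P m := knuth_eq_cover j m (knuth_eq_rsk_P uw).
split=> [|m]; rewrite -cover_P; first exact/greene_cover_tableau/rsk_P_rows_incr.
case=> s [/unzip1_readingP[CT [ET ->]] inc ms]; apply: leq_trans ms _; rewrite -ET.
apply: (@weight_colored_tableau _ (\max_(r <- CT) size r)).
- by apply/allP => r rCT; apply: leq_bigmax_seq.
- by rewrite ET; apply: rsk_P_col_strict.
- exact: inc.
Qed.

(** * Adjacent transpositions *)

Lemma uniq_swap2 (u v : seq nat) a b : uniq (u ++ [:: a; b] ++ v) = uniq (u ++ [:: b; a] ++ v).
Proof. by apply/perm_uniq; rewrite perm_cat2l perm_cat2r (perm_catC [:: a] [:: b]). Qed.

Lemma shape_sum_rsk_sort2 j u v a b : a < b -> uniq (u ++ [:: a; b] ++ v) ->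
  shape_sum j (rsk_P (u ++ [:: b; a] ++ v)) <= shape_sum j (rsk_P (u ++ [:: a; b] ++ v))
  <= shape_sum j (rsk_P (u ++ [:: b; a] ++ v)) + 1.
Proof.
move=> ab uw; have uw' : uniq (u ++ [:: b; a] ++ v) by rewrite -uniq_swap2.
have [cov max] := greene j uw; have [cov' max'] := greene j uw'.
apply/andP; split; first exact/max/(cover_sort2 ab cov').
by have := max' _ (cover_unsort2 ab cov); rewrite -subn1 leq_subLR addnC.
Qed.

Lemma swap_adjE (w : seq nat) p : p.+1 < size w ->
  w = take p w ++ [:: nth 0 w p; nth 0 w p.+1] ++ drop p.+2 w /\
  swap_adj w p = take p w ++ [:: nth 0 w p.+1; nth 0 w p] ++ drop p.+2 w.
Proof.
elim: p w => [|p IH] [|c w] //= ltp.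
  by case: w ltp => [|d w] //= _; rewrite drop0.
have [E1 E2] := IH w ltp; split; first by rewrite {1}E1.
by rewrite /swap_adj /= -/(swap_adj w p) E2.
Qed.

Lemma shape_sum_rsk_swap_adj j w p : uniq w -> p.+1 < size w ->
  if nth 0 w p < nth 0 w p.+1 then
    shape_sum j (rsk_P (swap_adj w p)) <= shape_sum j (rsk_P w)
      <= shape_sum j (rsk_P (swap_adj w p)) + 1
  else
    shape_sum j (rsk_P w) <= shape_sum j (rsk_P (swap_adj w p))
      <= shape_sum j (rsk_P w) + 1.
Proof.
move=> uw /swap_adjE[E1 ->]; rewrite [in rsk_P w]E1; rewrite E1 in uw.
move: (take p w) (nth 0 w p) (nth 0 w p.+1) (drop p.+2 w) uw => u a b v uw.
case: ltngtP => ab; first exact: shape_sum_rsk_sort2.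
  by apply: shape_sum_rsk_sort2; rewrite // -uniq_swap2.
by move: uw; rewrite ab cat_uniq /= mem_head !andbF.
Qed.

Lemma count_steps_bounds (f : nat -> nat) (d : nat -> bool) t :
  (forall m, m < t -> if d m then f m.+1 <= f m <= f m.+1 + 1 else f m <= f m.+1 <= f m + 1) ->
  f t <= f 0 + count (fun m => ~~ d m) (iota 0 t) /\ f 0 <= f t + count d (iota 0 t).
Proof.
elim: t => [|t IH] steps; first by rewrite !addn0.
have [le1 le2] := IH (fun m mt => steps m (ltnW mt)).
rewrite -[in iota 0 t.+1]addn1 iotaD !count_cat /=.
by have := steps t (ltnSn t); case: (d t) => /= /andP[]; lia.
Qed.

Lemma sum_part_shape j T : \sum_(i < j) part (map size T) i = shape_sum j T.
Proof.
apply: eq_bigr => i _; rewrite /part.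
by have [iT|iT] := ltnP i (size T); [rewrite (nth_map [::]) | rewrite !nth_default ?size_map].
Qed.

Lemma oneline_uniq n (s : 'S_n) : uniq (oneline s).
Proof. by rewrite map_inj_uniq ?enum_uniq // => i k /val_inj; apply: perm_inj. Qed.

Lemma size_oneline n (s : 'S_n) : size (oneline s) = n.
Proof. by rewrite size_map size_enum_ord. Qed.

Theorem lemma2 (n t : nat) (sig : nat -> 'S_n) (pos : nat -> nat) :
  (forall m, m < t -> (pos m).+1 < n /\
     oneline (sig m.+1) = swap_adj (oneline (sig m)) (pos m)) ->
  let s := count (dec_step sig pos) (iota 0 t) in
  let r := count (fun m => ~~ dec_step sig pos m) (iota 0 t) in
  let la := rsk_shape (sig 0) in
  let mu := rsk_shape (sig t) in
  forall j, 1 <= j <= n ->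
    (\sum_(i < j) part mu i <= \sum_(i < j) part la i + r) /\
    (\sum_(i < j) part la i <= \sum_(i < j) part mu i + s).
Proof.
move=> steps s r la mu j _; rewrite /la /mu /rsk_shape !sum_part_shape.
apply: (count_steps_bounds (f := fun m => shape_sum j (rsk_P (oneline (sig m))))) => m mt.
have [pn ->] := steps m mt.
by apply: shape_sum_rsk_swap_adj; rewrite ?oneline_uniq ?size_oneline.
Qed.
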